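(* Let $(S,\mu)$ be a complete, $\sigma$-finite positive measure space and let $X$ be a Banach space whose norm is Fréchet differentiable. Then every non-zero left symmetric point (with respect to Birkhoff–James orthogonality) of $L^1(\mu,X)$ is a smooth point of $L^1(\mu,X)$.
   Context: $L^1(\mu,X)$ is the Lebesgue–Bochner space of (classes of a.e. equal) strongly measurable $f:S\to X$ with $\|f\|=\int_S\|f(s)\|\,d\mu(s)<\infty$. In a normed space $Y$ over $\mathbb{K}$, $x\perp_{BJ}y$ means $\|x+\lambda y\|\ge\|x\|$ for all $\lambda\in\mathbb{K}$; $x$ is a left symmetric point if $x\perp_{BJ}y$ implies $y\perp_{BJ}x$ for all $y\in Y$. A non-zero $x$ is smooth if there is a unique norm-one $F\in Y^*$ with $F(x)=\|x\|$. The norm of $X$ is Fréchet differentiable if for every non-zero $x$ there is $\varphi\in X^*$ with $\lim_{h\to0}\big|\|x+h\|-\|x\|-\varphi(h)\big|/\|h\|=0$. *)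

From HB Require Import structures.
From mathcomp Require Import all_boot all_order all_algebra.
From mathcomp Require Import all_classical all_reals all_analysis.
From mathcomp Require Import complex.

Set Implicit Arguments.
Unset Strict Implicit.
Unset Printing Implicit Defensive.

Import Order.TTheory GRing.Theory Num.Theory.
Import numFieldNormedType.Exports.

Local Open Scope classical_set_scope.
Local Open Scope ring_scope.

(* Scalars K are either the reals R (toR = id, ofR = id) or the complex
   numbers R[i] (toR = Re, ofR = (_)%:C).  The norm of a K-normed space takes
   values in K; [toR] converts these (real) values into R, and [ofR] embeds
   R into K. *)
Section BochnerL1.
Context (R : realType) (K : numFieldType) (toR : K -> R) (ofR : R -> K).
Context (X : normedModType K).

Definition rnorm (x : X) : R := toR `|x|.

Definition frechet_diff_norm : Prop :=
  forall x : X, x != 0 ->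
  exists phi : X -> R,
    [/\ (forall h k : X, phi (h + k) = phi h + phi k),
        (forall (r : R) (h : X), phi (ofR r *: h) = r * phi h),
        (exists C : R, forall h, `|phi h| <= C * rnorm h) &
        (forall e : R, 0 < e -> exists2 del : R, 0 < del &
           forall h : X, 0 < rnorm h < del ->
             `|rnorm (x + h) - rnorm x - phi h| <= e * rnorm h)].

Context (d : measure_display) (S : measurableType d)
        (mu : {measure set S -> \bar R}).

Definition simple_measurable (g : S -> X) : Prop :=
  finite_set (range g) /\ forall x : X, measurable (g @^-1` [set x]).

Definition strongly_measurable (f : S -> X) : Prop :=
  exists g : nat -> S -> X, (forall n, simple_measurable (g n)) /\
    {ae mu, forall s, (fun n => g n s) @ \oo --> f s}.

Definition L1enorm (f : S -> X) : \bar R := (\int[mu]_s (rnorm (f s))%:E)%E.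

(* representatives of elements of L^1(mu, X) *)
Definition inL1 (f : S -> X) : Prop :=
  strongly_measurable f /\ (L1enorm f < +oo)%E.

(* the L^1 norm (meaningful on inL1 functions) *)
Definition L1norm (f : S -> X) : R := fine (L1enorm f).

Definition L1add (f g : S -> X) : S -> X := fun s => f s + g s.
Definition L1scale (l : K) (f : S -> X) : S -> X := fun s => l *: f s.

Definition BJ_L1 (f g : S -> X) : Prop :=
  forall l : K, L1norm f <= L1norm (L1add f (L1scale l g)).

Definition left_symmetric_L1 (f : S -> X) : Prop :=
  inL1 f /\ forall g, inL1 g -> BJ_L1 f g -> BJ_L1 g f.

(* norm-one elements of the dual of L^1(mu, X): linear functionals on the
   representatives, of operator norm exactly 1.  (A bounded functional
   vanishes on null functions, so these are exactly the norm-one elements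
   of L^1(mu,X)^*.) *)
Definition L1_dual_norm_one (F : (S -> X) -> K) : Prop :=
  [/\ (forall f g, inL1 f -> inL1 g -> F (L1add f g) = F f + F g),
      (forall l f, inL1 f -> F (L1scale l f) = l * F f),
      (forall f, inL1 f -> toR `|F f| <= L1norm f) &
      (forall e : R, 0 < e -> exists f, [/\ inL1 f, L1norm f <= 1 &
                                            1 - e < toR `|F f|])].

Definition smooth_L1 (f : S -> X) : Prop :=
  inL1 f /\ L1norm f != 0 /\
  exists F, [/\ L1_dual_norm_one F, F f = ofR (L1norm f) &
    forall G, L1_dual_norm_one G -> G f = ofR (L1norm f) ->
      forall g, inL1 g -> G g = F g].

End BochnerL1.

Definition cor3p5_for (R : realType) (K : numFieldType) (toR : K -> R)
  (ofR : R -> K) : Prop :=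
  forall (X : completeNormedModType K)
         (d : measure_display) (S : measurableType d)
         (mu : {measure set S -> \bar R}),
    measure_is_complete mu -> sigma_finite setT mu ->
    frechet_diff_norm toR ofR X ->
    forall f : S -> X,
      left_symmetric_L1 toR mu f -> L1norm toR mu f != 0 ->
      smooth_L1 toR ofR mu f.

From HB Require Import structures.
From mathcomp Require Import all_boot all_order all_algebra.
From mathcomp Require Import all_classical all_reals all_analysis.
From mathcomp Require Import complex.
From mathcomp Require Import ring lra.

(* A left symmetric f with ||f|| <> 0 vanishes only on a negligible set:
   otherwise sigma-finiteness gives a set B of finite positive measure on which
   f = 0, and g = 1_B y with ||g|| = ||f|| has support disjoint from f, so that
   f is orthogonal to f + g while f + g is not orthogonal to f.
   The one-sided derivative p v = lim_{t -> 0+} (||f + t v|| - ||f||) / t of the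
   L^1 norm at f is sublinear.  The quantity p v + p (-v) is the limit of the
   integrals of (||f s + t v s|| + ||f s - t v s|| - 2 ||f s||) / t, which are
   dominated by 2 ||v s|| and tend to 0 wherever f s <> 0 by Frechet
   differentiability; so p is real-linear.  Its complexification F is a
   norm-one functional with F f = ||f||, and every such functional G has
   Re G <= p, hence Re G = p and G = F. *)

Set Implicit Arguments.
Unset Strict Implicit.
Unset Printing Implicit Defensive.

(* The module keeps [Num.Theory.Re] from shadowing [complex.Re] in the final
   statement. *)
Module LeftSymmetricSmooth.
Import Order.TTheory GRing.Theory Num.Theory.
Import numFieldNormedType.Exports.
Local Open Scope classical_set_scope.
Local Open Scope ring_scope.

Lemma exists_unit_rotation (K : numFieldType) (z : K) :
  exists u : K, `|u| = 1 /\ u * z = `|z|.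
Proof.
have [->|z0] := eqVneq z 0; first by exists 1; rewrite normr1 mulr0 normr0.
exists (`|z| / z); split; last by rewrite divfK.
by rewrite normrM normfV normr_id divff // normr_eq0.
Qed.

Section SimpleMaps.
Context (d : measure_display) (S : measurableType d).

Definition simple_map (T : Type) (h : S -> T) :=
  finite_set (range h) /\ forall x, measurable (h @^-1` [set x]).

Lemma simple_map_preimage T (h : S -> T) Y : simple_map h -> measurable (h @^-1` Y).
Proof.
move=> [fin mes].
have -> : h @^-1` Y = \bigcup_(x in range h `&` Y) h @^-1` [set x].
  apply/seteqP; split => [s Ys|s [x [_ Yx] hx]]; last by rewrite /preimage /= hx.
  by exists (h s) => //; split => //; exists s.
by apply: fin_bigcup_measurable => //; exact: finite_setIl.
Qed.

Lemma simple_map_comp T U (h : S -> T) (phi : T -> U) :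
  simple_map h -> simple_map (phi \o h).
Proof.
move=> sh; split => [|x]; last exact: (simple_map_preimage (phi @^-1` [set x]) sh).
apply: (sub_finite_set (B := phi @` range h)); last by apply: finite_image; case: sh.
by move=> _ [s _ <-]; exists (h s) => //; exists s.
Qed.

Lemma simple_map_measurable d' (T : measurableType d') (h : S -> T) :
  simple_map h -> measurable_fun setT h.
Proof. by move=> sh _ Y _; rewrite setTI; exact: simple_map_preimage. Qed.

Lemma simple_mapD (V : zmodType) (g1 g2 : S -> V) :
  simple_map g1 -> simple_map g2 -> simple_map (fun s => g1 s + g2 s).
Proof.
move=> [f1 m1] [f2 m2]; split => [|x]; first exact: (finite_image11 (fun a b => a + b) f1 f2).
have -> : (fun s => g1 s + g2 s) @^-1` [set x] =
    \bigcup_(a in range g1) (g1 @^-1` [set a] `&` g2 @^-1` [set x - a]).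
  apply/seteqP; split => [s /= <-|s [a _ /= [-> ->]]]; last by rewrite addrC subrK.
  by exists (g1 s); [exists s | split => //=; rewrite addrC addKr].
by apply: fin_bigcup_measurable => // a _; apply: measurableI; [exact: m1 | exact: m2].
Qed.

Lemma simple_map_indic (R : realType) (A : set S) :
  measurable A -> simple_map (\1_A : S -> R).
Proof.
move=> mA; split => [|x].
- apply: (sub_finite_set (B := [set 0; 1])); last exact: finite_set2.
  by move=> _ [s _ <-]; rewrite /indic; case: (s \in A); [right | left].
- have := measurable_realfun.measurable_indic (R := R) (D := setT) mA measurableT (measurable_set1 x).
  by rewrite setTI.
Qed.

End SimpleMaps.

Section StronglyMeasurable.
Context (R : realType) (K : numFieldType) (X : normedModType K).
Context (d : measure_display) (S : measurableType d) (mu : {measure set S -> \bar R}).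
Local Notation sm := (@strongly_measurable R K X d S mu).

Lemma strongly_measurableD f g : sm f -> sm g -> sm (fun s => f s + g s).
Proof.
move=> [u [su fu]] [v [sv gv]]; exists (fun n s => u n s + v n s); split.
- by move=> n; exact: (simple_mapD (su n) (sv n)).
- by move: fu gv; apply: filterS2 => s fu gv; exact: cvgD.
Qed.

Lemma strongly_measurableZ l f : sm f -> sm (fun s => l *: f s).
Proof.
move=> [u [su fu]]; exists (fun n s => l *: u n s); split.
- by move=> n; exact: (simple_map_comp (fun x => l *: x) (su n)).
- by move: fu; apply: filterS => s fu; exact: cvgZl_tmp.
Qed.

Lemma simple_strongly_measurable g : simple_map g -> sm g.
Proof. by move=> sg; exists (fun _ => g); split => //; apply: aeW => s; exact: cvg_cst. Qed.

End StronglyMeasurable.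

Lemma sigma_finite_nonnegligible d (T : measurableType d) (R : realType)
    (mu : {measure set T -> \bar R}) (A : set T) :
  sigma_finite setT mu -> measurable A -> ~ mu.-negligible A ->
  exists B, [/\ measurable B, B `<=` A, (0 < mu B)%E & (mu B < +oo)%E].
Proof.
move=> [F FT mF] mA nA.
have [i nAF] : exists i, ~ mu.-negligible (A `&` F i).
  apply: contrapT => allneg; apply: nA.
  rewrite -(setIT A) FT setI_bigcupr; apply: negligible_bigcup => i.
  by apply: contrapT => ?; apply: allneg; exists i.
have mAF : measurable (A `&` F i) := measurableI _ _ mA (mF i).1.
exists (A `&` F i); split => //.
- by rewrite lt0e measure_ge0 andbT; apply/eqP => AF0; apply: nAF; exists (A `&` F i); split.
- apply: le_lt_trans (mF i).2.
  exact: (le_measure _ (mem_set mAF) (mem_set (mF i).1) (@subIsetr _ _ _)).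
Qed.

(* The scalar field K is R or R[i]: [ofR] embeds R, [toR] is the real part
   and [iK] is the imaginary unit (0 when K = R), with
   c = toR c + iK * Im c where Im c = toR (- iK * c). *)
Section RealScalars.
Variables (R : realType) (K : numFieldType) (toR : K -> R) (ofR : R -> K) (iK : K).
Hypothesis toRD : {morph toR : a b / a + b}.
Hypothesis toR_ofR : cancel ofR toR.
Hypothesis toR_le : {homo toR : a b / a <= b}.
Hypothesis toRM : forall a b : K, 0 <= a -> toR (a * b) = toR a * toR b.
Hypothesis ofRD : {morph ofR : r s / r + s}.
Hypothesis ofRM : {morph ofR : r s / r * s}.
Hypothesis normr_ofR : forall r, `|ofR r| = ofR `|r|.
Hypothesis toR_le_norm : forall z : K, toR z <= toR `|z|.
Hypothesis real_of_norm_le : forall z : K, toR `|z| <= toR z -> z = ofR (toR z).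
Hypothesis iK_sqr : iK * iK = -1 \/ iK = 0.
Hypothesis toR_iK : forall r, toR (iK * ofR r) = 0.
Hypothesis scalar_decomp : forall c, c = ofR (toR c) + iK * ofR (toR (- (iK * c))).

Lemma toR0 : toR 0 = 0.
Proof. by apply: (addrI (toR 0)); rewrite -toRD !addr0. Qed.

Lemma toRN a : toR (- a) = - toR a.
Proof. by apply/eqP; rewrite -addr_eq0 -toRD addNr toR0. Qed.

Lemma ofR0 : ofR 0 = 0.
Proof. by apply: (addrI (ofR 0)); rewrite -ofRD !addr0. Qed.

Lemma ofRN r : ofR (- r) = - ofR r.
Proof. by apply/eqP; rewrite -addr_eq0 -ofRD addNr ofR0. Qed.

Lemma ofR1 : ofR 1 = 1.
Proof.
have ofR1_neq0 : ofR 1 != 0.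
  by apply/eqP => e; have := toR_ofR 1; rewrite e toR0 => /eqP; rewrite eq_sym oner_eq0.
by apply: (mulfI ofR1_neq0); rewrite -ofRM !mulr1.
Qed.

Lemma toR1 : toR 1 = 1.
Proof. by rewrite -ofR1 toR_ofR. Qed.

Lemma ofR_ge0 r : 0 <= r -> 0 <= ofR r.
Proof. by move=> r0; rewrite -(ger0_norm r0) -normr_ofR. Qed.

Lemma toR_ofRM r z : 0 <= r -> toR (ofR r * z) = r * toR z.
Proof. by move=> r0; rewrite toRM ?toR_ofR // ofR_ge0. Qed.

Lemma toR_norm_ge0 (a : K) : 0 <= toR `|a|.
Proof. by rewrite -toR0; apply: toR_le. Qed.

Lemma nonneg_scalar_real c : 0 <= c -> c = ofR (toR c).
Proof.
move=> c0; have toR_iK1 : toR iK = 0 by rewrite -[iK]mulr1 -ofR1 toR_iK.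
by rewrite {1}[c]scalar_decomp toRN [iK * c]mulrC toRM // toR_iK1 mulr0 oppr0 ofR0 mulr0 addr0.
Qed.

Lemma scalar_eq_by_toR z w : (forall c, toR (c * z) = toR (c * w)) -> z = w.
Proof.
move=> zw; rewrite [z]scalar_decomp [w]scalar_decomp.
by have := zw 1; have := zw (- iK); rewrite !mul1r !mulNr => -> ->.
Qed.

Lemma toR_lt : {homo toR : a b / a < b}.
Proof.
move=> a b ab; rewrite -subr_gt0 -toRN -toRD.
have c0 : 0 <= b - a by rewrite subr_ge0 ltW.
have : toR (b - a) != 0.
  by apply: contraTneq ab => ba; rewrite -subr_gt0 (nonneg_scalar_real c0) ba ofR0 ltxx.
by rewrite lt_neqAle eq_sym => ->; rewrite -toR0 toR_le.
Qed.

Lemma ofR_gt0 r : 0 < r -> 0 < ofR r.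
Proof.
move=> r0; rewrite lt_neqAle ofR_ge0 ?ltW // andbT.
by apply: contraTneq r0 => /(congr1 toR); rewrite toR_ofR toR0 => <-; rewrite ltxx.
Qed.

Section NormedSpace.
Variable X : normedModType K.
Local Notation rn := (@rnorm R K toR X).

Lemma rnorm_ge0 x : 0 <= rn x.
Proof. by rewrite /rnorm -toR0; apply: toR_le. Qed.

Lemma rnormD x y : rn (x + y) <= rn x + rn y.
Proof. by rewrite /rnorm -toRD; apply/toR_le/ler_normD. Qed.

Lemma rnormZ l x : rn (l *: x) = toR `|l| * rn x.
Proof. by rewrite /rnorm normrZ toRM. Qed.

Lemma rnormN x : rn (- x) = rn x.
Proof. by rewrite /rnorm normrN. Qed.

Lemma rnorm_ofRZ r x : rn (ofR r *: x) = `|r| * rn x.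
Proof. by rewrite rnormZ normr_ofR toR_ofR. Qed.

Lemma rnorm0 : rn 0 = 0.
Proof. by rewrite /rnorm normr0 toR0. Qed.

Lemma rnorm_gt0 x : x != 0 -> 0 < rn x.
Proof. by move=> x0; rewrite -toR0; apply/toR_lt; rewrite normr_gt0. Qed.

Lemma rnorm_eq0 x : rn x = 0 -> x = 0.
Proof. by move=> x0; apply: contra_eq x0 => /rnorm_gt0/gt_eqF/negbT. Qed.

Lemma rnormB x y : rn x <= rn y + rn (x - y).
Proof. by have := rnormD y (x - y); rewrite addrC subrK. Qed.

Lemma cvg_rnorm (u : nat -> X) v :
  u n @[n --> \oo] --> v -> rn (u n) @[n --> \oo] --> rn v.
Proof.
move=> uv; apply/cvgrPdist_lt => e e0.
move/cvgrPdist_lt : uv => /(_ _ (ofR_gt0 e0)); apply: filterS => n vun.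
have {}vun : rn (v - u n) < e by have := toR_lt vun; rewrite toR_ofR.
rewrite ltr_norml; apply/andP; split.
- by have := rnormB (u n) v; rewrite -[rn (u n - v)]rnormN opprB; lra.
- by have := rnormB v (u n); lra.
Qed.

Definition sym_diffq t (a y : X) :=
  (rn (a + ofR t *: y) + rn (a - ofR t *: y) - 2 * rn a) / t.

Lemma sym_diffq_bounds t a y : 0 < t -> 0 <= sym_diffq t a y <= 2 * rn y.
Proof.
move=> t0; have rn_ty : rn (ofR t *: y) = t * rn y by rewrite rnorm_ofRZ gtr0_norm.
have up1 := rnormD a (ofR t *: y); have up2 := rnormD a (- (ofR t *: y)).
have low : rn a + rn a <= rn (a + ofR t *: y) + rn (a - ofR t *: y).
  have := rnormD (a + ofR t *: y) (a - ofR t *: y); rewrite addrACA subrr addr0.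
  have -> : a + a = ofR (1 + 1) *: a by rewrite ofRD ofR1 scalerDl scale1r.
  by rewrite rnorm_ofRZ ger0_norm // mulrDl mul1r.
rewrite rnormN rn_ty in up2; rewrite rn_ty in up1.
rewrite /sym_diffq; apply/andP; split; first by apply: divr_ge0; [lra | exact: ltW].
by rewrite ler_pdivrMr // mulrAC; lra.
Qed.

(* The linear terms [phi (t y)] and [phi (- t y)] of the Frechet expansions
   at [a] cancel. *)
Lemma sym_diffq_cvg0 a y : frechet_diff_norm toR ofR X -> a != 0 ->
  sym_diffq n.+1%:R^-1 a y @[n --> \oo] --> 0.
Proof.
move=> fr a0; have [phi [phiD _ _ phi_approx]] := fr a a0.
have phiN h : phi (- h) = - phi h.
  have phi0 : phi 0 = 0 by apply: (addrI (phi 0)); rewrite -phiD !addr0.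
  by apply/eqP; rewrite -addr_eq0 -phiD addNr phi0.
apply/cvgrPdist_lt => e e0.
have [->|y0] := eqVneq y 0.
  apply: nearW => n; rewrite /sym_diffq scaler0 subr0 addr0.
  have -> : rn a + rn a - 2 * rn a = 0 by ring.
  by rewrite mul0r subrr normr0.
have ry0 := rnorm_gt0 y0.
pose eps := e / (4 * rn y).
have eps0 : 0 < eps by rewrite divr_gt0 // mulr_gt0.
have [del del0 phi_del] := phi_approx eps eps0.
apply: filterS (near_infty_natSinv_lt (PosNum (divr_gt0 del0 ry0))) => n /= n_large.
set t := n.+1%:R^-1 : R.
have t0 : 0 < t by rewrite invr_gt0 ltr0Sn.
have [q0 _] := andP (sym_diffq_bounds a y t0).
rewrite sub0r normrN ger0_norm // /sym_diffq ltr_pdivrMr //.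
set h := ofR t *: y.
have rh : rn h = t * rn y by rewrite rnorm_ofRZ gtr0_norm.
have h_small : 0 < rn h < del by rewrite rh mulr_gt0 //= -ltr_pdivlMr.
have := phi_del h h_small; have := phi_del (- h); rewrite rnormN phiN => /(_ h_small).
rewrite !ler_norml => /andP[_ E2] /andP[_ E1].
have eps_h : eps * rn h = e * t / 4 by rewrite rh /eps; field; exact: lt0r_neq0.
rewrite eps_h in E1 E2.
have et : 0 < e * t by exact: mulr_gt0.
lra.
Qed.

End NormedSpace.

Section L1Space.
Context (X : normedModType K) (d : measure_display) (S : measurableType d).
Context (mu : {measure set S -> \bar R}).
Local Notation rn := (@rnorm R K toR X).
Local Notation sm := (@strongly_measurable R K X d S mu).
Local Notation N := (@L1norm R K toR X d S mu).
Local Notation L1 := (@inL1 R K toR X d S mu).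
Local Notation Int f := (mu.-integrable setT (EFin \o f)).
Hypothesis mu_complete : measure_is_complete mu.

Lemma measurable_rnorm h : sm h -> measurable_fun setT (fun s => rn (h s)).
Proof.
move=> [u [su [Z [mZ Z0 hZ]]]].
rewrite -(setUCr Z); apply/measurable_funU => //; first exact: measurableC.
split=> [_ Y _|]; first by apply: mu_complete; exists Z; split => // s [].
apply: (measurable_realfun.measurable_fun_cvg (h := fun n s => rn (u n s))).
  by move=> n; apply/measurable_funTS/simple_map_measurable/(simple_map_comp rn (su n)).
by move=> s Zs; apply: cvg_rnorm; apply: contrapT => nc; apply: Zs; apply: hZ.
Qed.

Lemma integrable_realZ (u : S -> R) a : Int u -> Int (fun s => a * u s).
Proof.
move=> iu; apply: (eq_integrable measurableT (fun s => (a%:E * (EFin \o u) s)%E)).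
  by move=> s _ /=; rewrite EFinM.
exact: integrableZl.
Qed.

Lemma integrable_realD (u v : S -> R) : Int u -> Int v -> Int (fun s => u s + v s).
Proof.
move=> iu iv; apply: (eq_integrable measurableT ((EFin \o u) \+ (EFin \o v))%E).
  by move=> s _ /=; rewrite EFinD.
exact: integrableD.
Qed.

Lemma RintegralDZ (u v : S -> R) a b : Int u -> Int v ->
  Rintegral mu setT (fun s => a * u s + b * v s) =
  a * Rintegral mu setT u + b * Rintegral mu setT v.
Proof.
by move=> iu iv; rewrite RintegralD ?RintegralZl //; exact: integrable_realZ.
Qed.

Lemma L1normE h : N h = Rintegral mu setT (fun s => rn (h s)).
Proof. by []. Qed.

Lemma L1norm_ge0 h : 0 <= N h.
Proof. by apply: Rintegral_ge0 => s _; exact: rnorm_ge0. Qed.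

Lemma integral_abs_rnorm h :
  (\int[mu]_s `|(EFin \o (fun s => rn (h s))) s|)%E = L1enorm toR mu h.
Proof. by apply: eq_integral => s _ /=; rewrite ger0_norm // rnorm_ge0. Qed.

Lemma inL1_integrable h : L1 h -> Int (fun s => rn (h s)).
Proof.
move=> [smh fin]; apply/integrableP; split; last by rewrite integral_abs_rnorm.
exact/measurable_realfun.measurable_EFinP/measurable_rnorm.
Qed.

Lemma inL1_dominated h (psi : S -> R) : sm h -> Int psi ->
  (forall s, rn (h s) <= psi s) -> L1 h.
Proof.
move=> smh ipsi hpsi; split => //; rewrite -integral_abs_rnorm.
have : Int (fun s => rn (h s)).
  apply: (le_integrable measurableT _ _ ipsi) => [|s _ /=].
  - exact/measurable_realfun.measurable_EFinP/measurable_rnorm.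
  - by rewrite lee_fin ger0_norm ?rnorm_ge0 //; exact: le_trans (hpsi s) (ler_norm _).
by case/integrableP.
Qed.

Lemma L1norm_le_comb h u v a b : sm h -> L1 u -> L1 v -> 0 <= a -> 0 <= b ->
  (forall s, rn (h s) <= a * rn (u s) + b * rn (v s)) ->
  L1 h /\ N h <= a * N u + b * N v.
Proof.
move=> smh Lu Lv a0 b0 hle.
have iuv : Int (fun s => a * rn (u s) + b * rn (v s)).
  by apply: integrable_realD; apply: integrable_realZ; exact: inL1_integrable.
have Lh : L1 h by exact: inL1_dominated iuv hle.
split => //; rewrite -RintegralDZ; try exact: inL1_integrable.
by apply: le_Rintegral => //; exact: inL1_integrable.
Qed.

Lemma L1norm_comb h u v a b : L1 u -> L1 v ->
  (forall s, rn (h s) = a * rn (u s) + b * rn (v s)) ->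
  N h = a * N u + b * N v.
Proof.
move=> Lu Lv he; rewrite -RintegralDZ; try exact: inL1_integrable.
by apply: eq_Rintegral => s _; exact: he.
Qed.

Lemma inL1_add u v : L1 u -> L1 v -> L1 (L1add u v).
Proof.
move=> Lu Lv; have smh : sm (L1add u v) by apply: strongly_measurableD; [case: Lu | case: Lv].
have [] // := L1norm_le_comb smh Lu Lv ler01 ler01 => s; rewrite !mul1r; exact: rnormD.
Qed.

Lemma inL1_scale l u : L1 u -> L1 (L1scale l u).
Proof.
move=> Lu; have smh : sm (L1scale l u) by apply: strongly_measurableZ; case: Lu.
have [] // := L1norm_le_comb smh Lu Lu (toR_norm_ge0 l) ler01 => s.
by rewrite /L1scale rnormZ lerDl mul1r rnorm_ge0.
Qed.

Lemma L1norm_scale l u : L1 u -> N (L1scale l u) = toR `|l| * N u.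
Proof.
move=> Lu; rewrite (L1norm_comb (a := toR `|l|) (b := 0) Lu Lu) ?mul0r ?addr0 // => s.
by rewrite /L1scale rnormZ mul0r addr0.
Qed.

Lemma L1norm_disjoint_comb u v a b : L1 u -> L1 v -> (forall s, u s = 0 \/ v s = 0) ->
  L1 (fun s => a *: u s + b *: v s) /\
  N (fun s => a *: u s + b *: v s) = toR `|a| * N u + toR `|b| * N v.
Proof.
move=> Lu Lv uv.
have rn_comb s : rn (a *: u s + b *: v s) = toR `|a| * rn (u s) + toR `|b| * rn (v s).
  by case: (uv s) => ->; rewrite scaler0 ?addr0 ?add0r rnormZ rnorm0 mulr0 ?addr0 ?add0r.
split; last exact: L1norm_comb.
have smh : sm (fun s => a *: u s + b *: v s).
  by apply: strongly_measurableD; apply: strongly_measurableZ; [case: Lu | case: Lv].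
have [] // := L1norm_le_comb smh Lu Lv (toR_norm_ge0 a) (toR_norm_ge0 b) => s.
by rewrite rn_comb.
Qed.

(* [f] is Birkhoff-James orthogonal to [f + g], since [|1 + l| + |l| >= 1],
   but [f + g] is not orthogonal to [f]: removing [f] halves its norm. *)
Lemma left_symmetric_disjoint f g : left_symmetric_L1 toR mu f -> L1 g ->
  (forall s, f s = 0 \/ g s = 0) -> N g = N f -> N f = 0.
Proof.
move=> [Lf f_sym] Lg fg Ngf.
pose h a b := fun s => a *: f s + b *: g s.
have Nh a b : N (h a b) = (toR `|a| + toR `|b|) * N f.
  by rewrite (L1norm_disjoint_comb a b Lf Lg fg).2 Ngf mulrDl.
have f_perp : BJ_L1 toR mu f (h 1 1).
  move=> l; have -> : L1add f (L1scale l (h 1 1)) = h (1 + l) l.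
    by apply/funext => s; rewrite /L1add /L1scale /h !scale1r scalerDr scalerDl scale1r addrA.
  rewrite Nh -[X in X <= _]mul1r ler_wpM2r ?L1norm_ge0 // -toR1 -toRD toR_le //.
  by have := ler_normD (1 + l) (- l); rewrite normrN addrK normr1.
have := f_sym _ (L1norm_disjoint_comb 1 1 Lf Lg fg).1 f_perp (-1).
have -> : L1add (h 1 1) (L1scale (-1) f) = h 0 1.
  by apply/funext => s; rewrite /L1add /L1scale /h !scale1r scale0r scaleN1r addrAC subrr !add0r.
rewrite !Nh normr0 toR0 normr1 toR1 add0r mul1r.
by have := L1norm_ge0 f; lra.
Qed.

Lemma L1_indic_scale (B : set S) (y : X) : measurable B -> (mu B < +oo)%E ->
  L1 (fun s => ofR (\1_B s) *: y) /\
  N (fun s => ofR (\1_B s) *: y) = rn y * fine (mu B).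
Proof.
move=> mB muB.
have rn_indic s : rn (ofR (\1_B s) *: y) = rn y * \1_B s.
  by rewrite rnorm_ofRZ mulrC ger0_norm // indicE; case: (s \in B).
have iB : Int (\1_B : S -> R).
  apply/integrableP; split.
    exact/measurable_realfun.measurable_EFinP/measurable_realfun.measurable_indic.
  rewrite (eq_integral (fun s => (\1_B s)%:E)); first by rewrite integral_indic // setIT.
  by move=> s _ /=; rewrite ger0_norm // indicE; case: (s \in B).
split.
- apply: (inL1_dominated _ (integrable_realZ (rn y) iB)) => [|s]; last by rewrite rn_indic.
  exact/simple_strongly_measurable/(simple_map_comp (fun r => ofR r *: y))/simple_map_indic.
- rewrite L1normE (eq_Rintegral _ (fun s _ => rn_indic s)) RintegralZl //.
  by rewrite /Rintegral integral_indic // setIT.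
Qed.

Lemma left_symmetric_ae_nonzero f : sigma_finite setT mu ->
  left_symmetric_L1 toR mu f -> N f != 0 -> mu.-negligible [set s | f s = 0].
Proof.
move=> mu_sf f_sym Nf0; have Lf := f_sym.1.
set Z := [set s | f s = 0].
have mZ : measurable Z.
  have -> : Z = (fun s => rn (f s)) @^-1` [set 0].
    by apply/seteqP; split => s /= fs; [rewrite fs rnorm0 | exact: rnorm_eq0].
  by have := measurable_rnorm Lf.1 measurableT (measurable_set1 0); rewrite setTI.
apply: contrapT => nZ.
have [B [mB BZ muB0 muB]] := sigma_finite_nonnegligible mu_sf mZ nZ.
have [s0 fs0] : exists s0, f s0 != 0.
  apply: contrapT => f_nz; move/eqP: Nf0; apply.
  have f0 s : f s = 0 by apply: contrapT => fs; apply: f_nz; exists s; apply/eqP.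
  by rewrite L1normE (eq_Rintegral _ (g := fun=> 0)) ?Rintegral_cst ?mul0r // => s _; rewrite f0 rnorm0.
have m0 : 0 < fine (mu B) by apply: fine_gt0; rewrite muB0 muB.
have fs0_gt0 := rnorm_gt0 fs0.
pose y := ofR (N f / (rn (f s0) * fine (mu B))) *: f s0.
have Ny : rn y * fine (mu B) = N f.
  rewrite rnorm_ofRZ ger0_norm ?divr_ge0 ?L1norm_ge0 ?mulr_ge0 ?ltW //.
  by rewrite -mulrA divfK // mulf_neq0 ?gt_eqF.
have [Lg Ng] := L1_indic_scale y mB muB.
have fg s : f s = 0 \/ ofR (\1_B s) *: y = 0.
  rewrite indicE; case: (boolP (s \in B)) => [/set_mem/BZ|_]; first by left.
  by right; rewrite ofR0 scale0r.
by move/eqP: Nf0; apply; apply: left_symmetric_disjoint f_sym Lg fg _; rewrite Ng.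
Qed.

Section OneSidedDerivative.
Variable f : S -> X.
Hypothesis Lf : L1 f.

Definition perturb t v := L1add f (L1scale (ofR t) v).
Definition norm_diffq v t := (N (perturb t v) - N f) / t.
(* An infimum, because [norm_diffq v] is nondecreasing on ]0, +oo[. *)
Definition norm_deriv v := inf [set norm_diffq v t | t in [set t : R | 0 < t]].

Lemma inL1_perturb t v : L1 v -> L1 (perturb t v).
Proof. by move=> Lv; apply: inL1_add => //; exact: inL1_scale. Qed.

Lemma L1norm_perturb_le t v : L1 v -> 0 <= t -> N (perturb t v) <= N f + t * N v.
Proof.
move=> Lv t0.
have bound s : rn (perturb t v s) <= 1 * rn (f s) + t * rn (v s).
  by rewrite mul1r; apply: le_trans (rnormD _ _) _; rewrite rnorm_ofRZ ger0_norm.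
by have [_] := L1norm_le_comb (inL1_perturb t Lv).1 Lf Lv ler01 t0 bound; rewrite mul1r.
Qed.

Lemma L1norm_perturb_ge t v : L1 v -> 0 <= t -> N f <= N (perturb t v) + t * N v.
Proof.
move=> Lv t0.
have bound s : rn (f s) <= 1 * rn (perturb t v s) + t * rn (v s).
  rewrite mul1r /perturb /L1add /L1scale.
  by have := rnormD (f s + ofR t *: v s) (- (ofR t *: v s)); rewrite addrK rnormN rnorm_ofRZ ger0_norm.
by have [_] := L1norm_le_comb Lf.1 (inL1_perturb t Lv) Lv ler01 t0 bound; rewrite mul1r.
Qed.

Lemma norm_diffq_ge v t : L1 v -> 0 < t -> - N v <= norm_diffq v t.
Proof.
move=> Lv t0; rewrite /norm_diffq ler_pdivlMr //.
by have := L1norm_perturb_ge Lv (ltW t0); rewrite (mulrC t); lra.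
Qed.

Lemma norm_diffq_le v t : L1 v -> 0 < t -> norm_diffq v t <= N v.
Proof.
move=> Lv t0; rewrite /norm_diffq ler_pdivrMr //.
by have := L1norm_perturb_le Lv (ltW t0); rewrite (mulrC t); lra.
Qed.

(* Convexity of t |-> N (f + t v): f + s v is a convex combination of f + t v and f. *)
Lemma norm_diffq_nondecreasing v s t : L1 v -> 0 < s -> s <= t ->
  norm_diffq v s <= norm_diffq v t.
Proof.
move=> Lv s0 st; have t0 : 0 < t := lt_le_trans s0 st.
set w := s / t.
have w0 : 0 <= w by rewrite divr_ge0 // ltW.
have w1 : 0 <= 1 - w by rewrite subr_ge0 ler_pdivrMr // mul1r.
have comb x : perturb s v x = ofR w *: perturb t v x + ofR (1 - w) *: f x.
  have wt : w * t = s by rewrite divfK // lt0r_neq0.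
  rewrite /perturb /L1add /L1scale scalerDr scalerA -ofRM wt.
  by rewrite addrAC -scalerDl -ofRD (addrC w) subrK ofR1 scale1r.
have bound x : rn (perturb s v x) <= w * rn (perturb t v x) + (1 - w) * rn (f x).
  by rewrite comb; apply: le_trans (rnormD _ _) _; rewrite !rnorm_ofRZ !ger0_norm.
have [_ hN] := L1norm_le_comb (inL1_perturb s Lv).1 (inL1_perturb t Lv) Lf w0 w1 bound.
rewrite /norm_diffq ler_pdivrMr //.
have -> : (N (perturb t v) - N f) / t * s = w * N (perturb t v) + (1 - w) * N f - N f.
  by rewrite /w; field; exact: lt0r_neq0.
lra.
Qed.

Lemma norm_deriv_le_diffq v t : L1 v -> 0 < t -> norm_deriv v <= norm_diffq v t.
Proof.
move=> Lv t0; apply: ge_inf; last by exists t.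
by exists (- N v) => _ [u u0 <-]; exact: norm_diffq_ge.
Qed.

Lemma norm_deriv_ge v c : (forall t, 0 < t -> c <= norm_diffq v t) -> c <= norm_deriv v.
Proof.
move=> h; apply: lb_le_inf; first by exists (norm_diffq v 1); exists 1 => //=; exact: ltr01.
by move=> _ [t t0 <-]; exact: h.
Qed.

Lemma norm_deriv_le v : L1 v -> norm_deriv v <= N v.
Proof. by move=> Lv; apply: le_trans (norm_deriv_le_diffq Lv ltr01) (norm_diffq_le Lv ltr01). Qed.

Lemma norm_deriv_posZ r v : 0 < r -> L1 v -> norm_deriv (L1scale (ofR r) v) = r * norm_deriv v.
Proof.
move=> r0 Lv; have Lrv : L1 (L1scale (ofR r) v) by exact: inL1_scale.
have diffqZ t : 0 < t -> norm_diffq (L1scale (ofR r) v) t = r * norm_diffq v (t * r).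
  move=> t0; rewrite /norm_diffq.
  have -> : perturb t (L1scale (ofR r) v) = perturb (t * r) v.
    by apply/funext => x; rewrite /perturb /L1add /L1scale scalerA -ofRM.
  by field; apply/andP; split; exact: lt0r_neq0.
apply/le_anti/andP; split.
- rewrite -ler_pdivrMl //; apply: norm_deriv_ge => t t0; rewrite ler_pdivrMl //.
  apply: le_trans (norm_deriv_le_diffq Lrv (divr_gt0 t0 r0)) _.
  by rewrite diffqZ ?divr_gt0 // divfK ?gt_eqF.
- apply: norm_deriv_ge => t t0; rewrite diffqZ // ler_pM2l //.
  exact/norm_deriv_le_diffq/mulr_gt0.
Qed.

Lemma norm_deriv_self : norm_deriv f = N f.
Proof.
have diffq_f t : 0 < t -> norm_diffq f t = N f.
  move=> t0; rewrite /norm_diffq.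
  have -> : N (perturb t f) = (1 + t) * N f.
    rewrite (L1norm_comb (a := 1 + t) (b := 0) Lf Lf) ?mul0r ?addr0 // => x.
    rewrite mul0r addr0 /perturb /L1add /L1scale.
    have -> : f x + ofR t *: f x = ofR (1 + t) *: f x by rewrite ofRD ofR1 scalerDl scale1r.
    by rewrite rnorm_ofRZ ger0_norm // addr_ge0 // ltW.
  by field; exact: lt0r_neq0.
apply/le_anti/andP; split; last by apply: norm_deriv_ge => t t0; rewrite diffq_f.
by rewrite -(diffq_f 1 ltr01); exact: norm_deriv_le_diffq.
Qed.

(* f + t (u + v) is the midpoint of f + 2t u and f + 2t v. *)
Lemma norm_deriv_subadd u v : L1 u -> L1 v ->
  norm_deriv (L1add u v) <= norm_deriv u + norm_deriv v.
Proof.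
move=> Lu Lv; have Luv := inL1_add Lu Lv.
have diffq_split t : 0 < t ->
    norm_diffq (L1add u v) t <= norm_diffq u (2 * t) + norm_diffq v (2 * t).
  move=> t0; have h2 : 0 <= 2^-1 :> R by rewrite invr_ge0.
  have bound x : rn (perturb t (L1add u v) x) <=
      2^-1 * rn (perturb (2 * t) u x) + 2^-1 * rn (perturb (2 * t) v x).
    have -> : perturb t (L1add u v) x =
        ofR 2^-1 *: perturb (2 * t) u x + ofR 2^-1 *: perturb (2 * t) v x.
      rewrite /perturb /L1add /L1scale !scalerDr !scalerA -!ofRM.
      have -> : 2^-1 * (2 * t) = t by field.
      by rewrite addrACA -scalerDl -ofRD (_ : 2^-1 + 2^-1 = 1) ?ofR1 ?scale1r //; field.
    by apply: le_trans (rnormD _ _) _; rewrite !rnorm_ofRZ !ger0_norm.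
  have [_ hN] := L1norm_le_comb (inL1_perturb t Luv).1 (inL1_perturb (2 * t) Lu)
    (inL1_perturb (2 * t) Lv) h2 h2 bound.
  rewrite /norm_diffq ler_pdivrMr //.
  have -> : ((N (perturb (2 * t) u) - N f) / (2 * t) + (N (perturb (2 * t) v) - N f) / (2 * t)) * t
     = 2^-1 * N (perturb (2 * t) u) + 2^-1 * N (perturb (2 * t) v) - N f.
    by field; exact: lt0r_neq0.
  lra.
have deriv_le t1 t2 : 0 < t1 -> 0 < t2 ->
    norm_deriv (L1add u v) <= norm_diffq u t1 + norm_diffq v t2.
  move=> t10 t20; pose t := Num.min t1 t2 / 2.
  have t0 : 0 < t by rewrite divr_gt0 // lt_min t10 t20.
  apply: le_trans (norm_deriv_le_diffq Luv t0) _; apply: le_trans (diffq_split t t0) _.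
  rewrite (_ : 2 * t = Num.min t1 t2); last by rewrite /t; field.
  by apply: lerD; apply: norm_diffq_nondecreasing; rewrite ?lt_min ?t10 ?t20 ?ge_min ?lexx ?orbT.
have : norm_deriv (L1add u v) - norm_deriv v <= norm_deriv u.
  apply: norm_deriv_ge => t1 t10.
  suff : norm_deriv (L1add u v) - norm_diffq u t1 <= norm_deriv v by lra.
  by apply: norm_deriv_ge => t2 t20; have := deriv_le t1 t2 t10 t20; lra.
lra.
Qed.

Lemma norm_deriv0 : norm_deriv (fun=> 0) = 0.
Proof.
have L0 : L1 (fun=> 0).
  by have := inL1_scale 0 Lf; congr L1; apply/funext => x; rewrite /L1scale scale0r.
have diffq0 t : norm_diffq (fun=> 0) t = 0.
  rewrite /norm_diffq; have -> : perturb t (fun=> 0) = f by apply/funext => x; rewrite /perturb /L1add /L1scale scaler0 addr0.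
  by rewrite subrr mul0r.
apply/le_anti/andP; split; last by apply: norm_deriv_ge => t _; rewrite diffq0.
by rewrite -(diffq0 1); exact: norm_deriv_le_diffq.
Qed.

Lemma support_functional_le_deriv (G : (S -> X) -> K) :
  (forall u w, L1 u -> L1 w -> G (L1add u w) = G u + G w) ->
  (forall l u, L1 u -> G (L1scale l u) = l * G u) ->
  (forall u, L1 u -> toR `|G u| <= N u) ->
  G f = ofR (N f) -> forall v, L1 v -> toR (G v) <= norm_deriv v.
Proof.
move=> GD GZ Gb Gf v Lv; apply: norm_deriv_ge => t t0; rewrite /norm_diffq ler_pdivlMr //.
have Gp : toR (G (perturb t v)) = N f + t * toR (G v).
  by rewrite GD ?GZ ?Gf ?toRD ?toR_ofR ?toR_ofRM ?ltW //; exact: inL1_scale.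
have := le_trans (toR_le_norm _) (Gb _ (inL1_perturb t Lv)).
by rewrite Gp (mulrC _ t); lra.
Qed.

Hypothesis frechet : frechet_diff_norm toR ofR X.
Hypothesis f_ae_nonzero : mu.-negligible [set s | f s = 0].

Lemma sym_diffq_integral t v : 0 < t -> L1 v ->
  Int (fun s => sym_diffq t (f s) (v s)) /\
  Rintegral mu setT (fun s => sym_diffq t (f s) (v s)) =
    norm_diffq v t + norm_diffq (L1scale (-1) v) t.
Proof.
move=> t0 Lv; have Lv' := inL1_scale (-1) Lv.
have -> : (fun s => sym_diffq t (f s) (v s)) = fun s =>
    t^-1 * (rn (perturb t v s) + rn (perturb t (L1scale (-1) v) s)) + (- (2 / t)) * rn (f s).
  apply/funext => s; rewrite /sym_diffq /perturb /L1add /L1scale scaleN1r scalerN.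
  by field; exact: lt0r_neq0.
have iD : Int (fun s => rn (perturb t v s) + rn (perturb t (L1scale (-1) v) s)).
  by apply: integrable_realD; apply/inL1_integrable/inL1_perturb.
split; first by apply: integrable_realD; apply: integrable_realZ => //; exact: inL1_integrable.
rewrite RintegralDZ ?inL1_integrable // RintegralD //; try exact/inL1_integrable/inL1_perturb.
by rewrite /norm_diffq !L1normE; field; exact: lt0r_neq0.
Qed.

Lemma sym_diffq_integral_cvg0 v : L1 v ->
  Rintegral mu setT (fun s => sym_diffq n.+1%:R^-1 (f s) (v s)) @[n --> \oo] --> 0.
Proof.
move=> Lv; pose q n s := sym_diffq n.+1%:R^-1 (f s) (v s).
have tn0 n : 0 < n.+1%:R^-1 :> R by rewrite invr_gt0 ltr0Sn.
have mq n := (elimT (integrableP _ _ _) (sym_diffq_integral (tn0 n) Lv).1).1.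
have dom : Int (fun s => 2 * rn (v s)) by apply: integrable_realZ; exact: inL1_integrable.
have q_dom : {ae mu, forall x n, setT x ->
    (`|(EFin \o q n) x| <= (EFin \o (fun s => (2 * rn (v s))%R)) x)%E}.
  apply: aeW => x n _ /=; rewrite lee_fin.
  by have /andP[q0 q2] := sym_diffq_bounds (f x) (v x) (tn0 n); rewrite ger0_norm.
have q_cvg : {ae mu, forall x, setT x -> (EFin \o q n) x @[n --> \oo] --> cst 0%E x}.
  apply: (negligibleS _ f_ae_nonzero) => x /= nq; apply: contrapT => fx0; apply: nq => _.
  by apply/fine_cvgP; split; [exact: nearW | apply: sym_diffq_cvg0 => //; apply/eqP].
have [_ _] := dominated_convergence measurableT mq (measurable_cst _) q_cvg dom q_dom.
by rewrite integral0 => /fine_cvgP[].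
Qed.

Lemma norm_deriv_oppr_le v : L1 v -> norm_deriv v + norm_deriv (L1scale (-1) v) <= 0.
Proof.
move=> Lv; apply/ler_addgt0Pr => e e0; rewrite add0r.
have /cvgrPdist_lt/(_ e e0)/filter_ex[n] := sym_diffq_integral_cvg0 Lv.
rewrite sub0r normrN => /(le_lt_trans (ler_norm _))/ltW; apply: le_trans.
have tn0 : 0 < n.+1%:R^-1 :> R by rewrite invr_gt0 ltr0Sn.
rewrite (sym_diffq_integral tn0 Lv).2.
by apply: lerD; apply: norm_deriv_le_diffq tn0 => //; exact: inL1_scale.
Qed.

Lemma norm_derivN v : L1 v -> norm_deriv (L1scale (-1) v) = - norm_deriv v.
Proof.
move=> Lv; have Lv' := inL1_scale (-1) Lv.
have := norm_deriv_subadd Lv Lv'.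
have -> : L1add v (L1scale (-1) v) = fun=> 0.
  by apply/funext => x; rewrite /L1add /L1scale scaleN1r subrr.
by rewrite norm_deriv0; have := norm_deriv_oppr_le Lv; lra.
Qed.

Lemma norm_derivD u w : L1 u -> L1 w ->
  norm_deriv (L1add u w) = norm_deriv u + norm_deriv w.
Proof.
move=> Lu Lw; apply/le_anti; rewrite norm_deriv_subadd //=.
have := norm_deriv_subadd (inL1_scale (-1) Lu) (inL1_scale (-1) Lw).
have <- : L1scale (-1) (L1add u w) = L1add (L1scale (-1) u) (L1scale (-1) w).
  by apply/funext => x; rewrite /L1add /L1scale scalerDr.
by rewrite !norm_derivN //; [lra | exact: inL1_add].
Qed.

Lemma norm_derivZ r v : L1 v -> norm_deriv (L1scale (ofR r) v) = r * norm_deriv v.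
Proof.
move=> Lv; case: (ltgtP r 0) => [r0|r0|->]; last 2 first.
- exact: norm_deriv_posZ.
- have -> : L1scale (ofR 0) v = fun=> 0 by apply/funext => x; rewrite /L1scale ofR0 scale0r.
  by rewrite norm_deriv0 mul0r.
have -> : L1scale (ofR r) v = L1scale (ofR (- r)) (L1scale (-1) v).
  by apply/funext => x; rewrite /L1scale scalerA ofRN mulrN1 opprK.
by rewrite norm_deriv_posZ ?oppr_gt0 ?norm_derivN ?mulrNN //; exact: inL1_scale.
Qed.

(* The complexification [p v - i p (i v)] of the real-linear [p := norm_deriv]. *)
Definition deriv_functional v :=
  ofR (norm_deriv v) + iK * ofR (- norm_deriv (L1scale iK v)).

Lemma toR_deriv_functional v : toR (deriv_functional v) = norm_deriv v.
Proof. by rewrite toRD toR_ofR toR_iK addr0. Qed.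

Lemma deriv_functionalD u w : L1 u -> L1 w ->
  deriv_functional (L1add u w) = deriv_functional u + deriv_functional w.
Proof.
move=> Lu Lw; rewrite /deriv_functional.
have -> : L1scale iK (L1add u w) = L1add (L1scale iK u) (L1scale iK w).
  by apply/funext => x; rewrite /L1add /L1scale scalerDr.
rewrite !norm_derivD //; try exact: inL1_scale.
rewrite opprD !ofRD; ring.
Qed.

Lemma deriv_functional_ofRZ r v : L1 v ->
  deriv_functional (L1scale (ofR r) v) = ofR r * deriv_functional v.
Proof.
move=> Lv; rewrite /deriv_functional.
have -> : L1scale iK (L1scale (ofR r) v) = L1scale (ofR r) (L1scale iK v).
  by apply/funext => x; rewrite /L1scale !scalerA mulrC.
rewrite !norm_derivZ //; last exact: inL1_scale.
rewrite -mulrN !ofRM; ring.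
Qed.

Lemma deriv_functional_iKZ v : L1 v -> deriv_functional (L1scale iK v) = iK * deriv_functional v.
Proof.
move=> Lv; rewrite /deriv_functional; case: iK_sqr => iK2.
- have -> : L1scale iK (L1scale iK v) = L1scale (-1) v.
    by apply/funext => x; rewrite /L1scale scalerA iK2.
  rewrite norm_derivN // opprK mulrDr mulrA iK2 ofRN; ring.
- have iK0 u : L1scale iK u = fun=> 0 by apply/funext => x; rewrite /L1scale iK2 scale0r.
  by rewrite !iK0 norm_deriv0 iK2 !mul0r ofR0 addr0.
Qed.

Lemma deriv_functionalZ c v : L1 v -> deriv_functional (L1scale c v) = c * deriv_functional v.
Proof.
move=> Lv; have Lv' := inL1_scale iK Lv.
pose a := toR c; pose b := toR (- (iK * c)).
have -> : L1scale c v = L1add (L1scale (ofR a) v) (L1scale (ofR b) (L1scale iK v)).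
  apply/funext => x; rewrite /L1add /L1scale scalerA [ofR b * iK]mulrC -scalerDl.
  by rewrite -scalar_decomp.
rewrite deriv_functionalD; try exact: inL1_scale.
rewrite !deriv_functional_ofRZ // deriv_functional_iKZ //.
by rewrite mulrA [ofR b * iK]mulrC -mulrDl -scalar_decomp.
Qed.

Lemma deriv_functional_bound v : L1 v -> toR `|deriv_functional v| <= N v.
Proof.
move=> Lv; have [u [u1 <-]] := exists_unit_rotation (deriv_functional v).
rewrite -deriv_functionalZ // toR_deriv_functional.
by apply: le_trans (norm_deriv_le (inL1_scale u Lv)) _; rewrite L1norm_scale // u1 toR1 mul1r.
Qed.

Lemma deriv_functional_self : deriv_functional f = ofR (N f).
Proof.
rewrite -norm_deriv_self -toR_deriv_functional; apply: real_of_norm_le.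
by rewrite toR_deriv_functional norm_deriv_self; exact: deriv_functional_bound.
Qed.

Lemma support_functional_unique (G : (S -> X) -> K) :
  (forall u w, L1 u -> L1 w -> G (L1add u w) = G u + G w) ->
  (forall l u, L1 u -> G (L1scale l u) = l * G u) ->
  (forall u, L1 u -> toR `|G u| <= N u) ->
  G f = ofR (N f) -> forall v, L1 v -> G v = deriv_functional v.
Proof.
move=> GD GZ Gb Gf v Lv.
have toRG w : L1 w -> toR (G w) = norm_deriv w.
  move=> Lw; have le := support_functional_le_deriv GD GZ Gb Gf.
  apply/le_anti; rewrite le //=.
  have := le _ (inL1_scale (-1) Lw); rewrite norm_derivN // GZ // mulN1r toRN; lra.
apply: scalar_eq_by_toR => c.
by rewrite -GZ // -deriv_functionalZ // toR_deriv_functional toRG //; exact: inL1_scale.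
Qed.

Lemma smooth_L1_of_frechet : N f != 0 -> smooth_L1 toR ofR mu f.
Proof.
move=> Nf0; have Nf_gt0 : 0 < N f by rewrite lt_neqAle eq_sym Nf0 L1norm_ge0.
split=> //; split=> //; exists deriv_functional; split.
- split; [exact: deriv_functionalD | by move=> l u; exact: deriv_functionalZ |
    exact: deriv_functional_bound |].
  move=> e e0; exists (L1scale (ofR (N f)^-1) f); split; first exact: inL1_scale.
    by rewrite L1norm_scale // normr_ofR toR_ofR ger0_norm ?invr_ge0 ?L1norm_ge0 // mulVf.
  rewrite deriv_functionalZ // deriv_functional_self -ofRM mulVf //.
  by rewrite normr_ofR normr1 toR_ofR; lra.
- exact: deriv_functional_self.
- move=> G [GD GZ Gb _] Gf g Lg; exact: support_functional_unique.
Qed.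

End OneSidedDerivative.
End L1Space.

Theorem cor3p5_for_scalars : cor3p5_for toR ofR.
Proof.
move=> X d S mu mu_cpl mu_sf frechet f f_sym Nf0.
have f_ae_nonzero := left_symmetric_ae_nonzero mu_cpl mu_sf f_sym Nf0.
exact: (smooth_L1_of_frechet (X := X) mu_cpl f_sym.1 frechet f_ae_nonzero Nf0).
Qed.

End RealScalars.

Section ComplexScalars.
Variable R : realType.
Local Open Scope complex_scope.
Implicit Types (r : R) (z w : R[i]).

Lemma Re_le z w : z <= w -> complex.Re z <= complex.Re w.
Proof. by rewrite lecE => /andP[]. Qed.

Lemma Re_nonnegM z w : 0 <= z -> complex.Re (z * w) = complex.Re z * complex.Re w.
Proof.
by case: z => a b; case: w => c e; rewrite lecE /= => /andP[/eqP -> _]; rewrite mul0r subr0.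
Qed.

Lemma normc_real r : `|r%:C| = `|r|%:C.
Proof. by rewrite normc_def /= expr0n addr0 sqrtr_sqr. Qed.

Lemma Re_le_normc z : complex.Re z <= complex.Re `|z|.
Proof.
case: z => a b; rewrite normc_def /=; apply: le_trans (ler_norm a) _.
by rewrite -sqrtr_sqr ler_wsqrtr // lerDl sqr_ge0.
Qed.

Lemma real_of_normc_le_Re z : complex.Re `|z| <= complex.Re z -> z = (complex.Re z)%:C.
Proof.
case: z => a b; rewrite normc_def /= => le_norm.
have a0 : 0 <= a by apply: le_trans le_norm; exact: sqrtr_ge0.
have b2_le0 : b ^+ 2 <= 0.
  by rewrite -(gerDl (a ^+ 2)) -ler_sqrt ?addr_ge0 ?sqr_ge0 // sqrtr_sqr ger0_norm.
have /eqP : b ^+ 2 = 0 by apply/le_anti; rewrite b2_le0 sqr_ge0.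
by rewrite sqrf_eq0 => /eqP ->.
Qed.

Lemma Re_iM r : complex.Re ('i * r%:C) = 0.
Proof. by rewrite /= mul0r mul1r subrr. Qed.

Lemma complex_Re_decomp z : z = (complex.Re z)%:C + 'i * (complex.Re (- ('i * z)))%:C.
Proof. by case: z => a b; apply/eqP; rewrite eq_complex /=; apply/andP; split; apply/eqP; ring. Qed.

End ComplexScalars.

Lemma cor3p5_real (R : realType) : cor3p5_for (fun x : R => x) (fun x : R => x).
Proof.
apply: (@cor3p5_for_scalars R R _ _ 0) => //; first exact: ler_norm.
- by right.
- by move=> r; rewrite mul0r.
- by move=> c; rewrite mul0r addr0.
Qed.

Lemma cor3p5_complex (R : realType) : cor3p5_for (@complex.Re R) (fun x : R => (x%:C)%C : R[i]).
Proof.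
apply: (@cor3p5_for_scalars R R[i] _ _ 'i%C).
- by case=> a b [c e].
- by [].
- exact: Re_le.
- exact: Re_nonnegM.
- exact: rmorphD.
- exact: rmorphM.
- exact: normc_real.
- exact: Re_le_normc.
- exact: real_of_normc_le_Re.
- by left; rewrite -expr2 sqr_i.
- exact: Re_iM.
- exact: complex_Re_decomp.
Qed.

End LeftSymmetricSmooth.

Theorem corollary3p5 :
  (forall R : realType, cor3p5_for (fun x : R => x) (fun x : R => x)) /\
  (forall R : realType,
     cor3p5_for (@Re R) (fun x : R => (x%:C)%C : R[i])).
Proof. by split=> R; [exact: LeftSymmetricSmooth.cor3p5_real | exact: LeftSymmetricSmooth.cor3p5_complex]. Qed.
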